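(* Let $(X,\phi)$ be a dynamical system with $X$ locally compact metrizable and $\phi$ a homeomorphism, let $\mathcal A = C_0(X)\times_\phi \mathbb Z_+$ be its semicrossed product, and let $(X_\gamma)_{\gamma\le\gamma_0}$ be the transfinite sequence of sets of iterated non-wandering points defined below. For each ordinal $\gamma\le\gamma_0$ let $$\mathcal I_\gamma = \{A\in\mathcal A : E_0(A)=0,\ E_n(A)(x)=0 \text{ for all } x\in X_\gamma \text{ and all integers } n\ge 1\}.$$ If $\gamma\le\gamma_0$ is a limit ordinal, then $\mathcal I_\gamma = \overline{\bigcup_{\beta<\gamma}\mathcal I_\beta}$ (closure in the norm of $\mathcal A$).
   Context: Semicrossed product: let $X$ be a locally compact metrizable space and $\phi:X\to X$ a homeomorphism; set $\alpha_n(f)=f\circ\phi^n$ for $f\in C_0(X)$, $n\in\mathbb Z_+$. On $\ell^1(\mathbb Z_+,C_0(X))$, whose elements are written as formal series $\sum_{n\ge0}U^nf_n$ with norm $\sum_n\|f_n\|_\infty$, define multiplication by $U^nf\,U^mg=U^{n+m}(\alpha_m(f)g)$ extended by linearity and continuity. Fix a faithful nondegenerate representation of $C_0(X)$ on a Hilbert space $\mathcal H_0$ and represent $\ell^1(\mathbb Z_+,C_0(X))$ on $\mathcal H_0\otimes\ell^2(\mathbb Z_+)$ by $\pi(U^nf)(\xi\otimes e_k)=\alpha_k(f)\xi\otimes e_{k+n}$. The semicrossed product $\mathcal A=C_0(X)\times_\phi\mathbb Z_+$ is the operator-norm closure of the image (independent of the choice of $\mathcal H_0$ up to isometric isomorphism).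 The Fourier coefficient maps $E_n(\sum_m U^mf_m)=f_n$ are contractive in the operator norm and extend to contractions $E_n:\mathcal A\to C_0(X)$; an element $A\in\mathcal A$ is $0$ iff $E_n(A)=0$ for all $n$. Iterated non-wandering sets: a set $Y\subseteq X$ is wandering if $\phi^m(Y)\cap\phi^n(Y)=\emptyset$ for all $m\ne n$ in $\mathbb Z_+$; a point is wandering if it has an open wandering neighbourhood, otherwise non-wandering. Let $X_1$ be the set of non-wandering points of $(X,\phi)$ and $\phi_1=\phi|_{X_1}$. Recursively, $X_{\gamma+1}$ is the set of non-wandering points of the system $(X_\gamma,\phi_\gamma)$ and $\phi_{\gamma+1}=\phi|_{X_{\gamma+1}}$; for a limit ordinal $\gamma$, $X_\gamma=\bigcap_{\beta<\gamma}X_\beta$ and $\phi_\gamma=\phi|_{X_\gamma}$. This process stabilizes at some ordinal $\gamma_0$. (Convention: $X_0 = X$.) *)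

From HB Require Import structures.
From mathcomp Require Import all_boot all_order all_algebra.
From mathcomp Require Import all_classical all_reals all_analysis.
From mathcomp Require Import complex.
Set Implicit Arguments. Unset Strict Implicit. Unset Printing Implicit Defensive.
Import Order.TTheory GRing.Theory Num.Theory.
Import numFieldTopology.Exports numFieldNormedType.Exports.
Local Open Scope classical_set_scope.
Local Open Scope ring_scope.

(* the usual (norm) topology on the complex numbers R[i] *)
HB.instance Definition _ (R : realType) :=
  PseudoPointedMetric.copy R[i] (R[i])^o.

Section Defs.
Variables (R : realType) (X : pseudoMetricType R).
Notation C := (R[i]).

Definition C0 (f : X -> C) : Prop :=
  continuous f /\
  (forall e : R, 0 < e -> exists K : set X, compact K /\
     forall x, ~ K x -> `|f x| < (e%:C)%C).

Definition homeomorphism (phi : X -> X) : Prop :=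
  exists psi : X -> X, cancel phi psi /\ cancel psi phi /\
    continuous phi /\ continuous psi.

(* An element of A is encoded by its sequence of Fourier coefficients
   (E_n(A))_n; a : nat -> X -> C with a n = E_n(A). *)
Definition coefs := nat -> X -> C.

(* finite sums  sum_n U^n f_n  with f_n in C_0(X) *)
Definition is_poly (p : coefs) : Prop :=
  (forall n, C0 (p n)) /\ exists N, forall n, (N <= n)%N -> p n = fun=> 0.

(* ||pi(a)|| <= c, where pi is the representation on l^2(X) (x) l^2(Z_+),
   C_0(X) acting on l^2(X) by multiplication (faithful, nondegenerate):
   pi(a)(delta_x (x) e_k) = sum_n a_n(phi^k x) delta_x (x) e_(k+n).
   The bound is tested on all finitely supported vectors xi (supported on
   the distinct points xs i, i < N, and on e_k, k < K), and on all finite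
   truncations (m < M) of the image vector. *)
Definition opnorm_le (phi : X -> X) (a : coefs) (c : R) : Prop :=
  forall (N K M : nat) (xs : 'I_N -> X) (xi : 'I_N -> nat -> C),
    injective xs ->
    \sum_(i < N) \sum_(m < M)
       `| \sum_(k < K | (k <= m)%N) a (m - k)%N (iter k phi (xs i)) * xi i k | ^+ 2
    <= ((c ^+ 2)%:C)%C * \sum_(i < N) \sum_(k < K) `| xi i k | ^+ 2.

(* membership in the semicrossed product C_0(X) x_phi Z_+ : norm limit of
   finite sums (the coefficients are then automatically in C_0(X)) *)
Definition in_scp (phi : X -> X) (a : coefs) : Prop :=
  (forall n, C0 (a n)) /\
  forall e : R, 0 < e -> exists p, is_poly p /\
     opnorm_le phi (fun n x => a n x - p n x) e.

Definition nonwandering (phi : X -> X) (Y : set X) : set X :=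
  [set y | Y y /\ forall U : set X, open U -> U y ->
     exists m n : nat, m <> n /\
       (iter m phi @` (U `&` Y) `&` iter n phi @` (U `&` Y)) !=set0].

Section Ordinals.
Variables (d : Order.disp_t) (O : orderType d).

(* O is a well-order: it stands for an initial segment of the ordinals *)
Definition well_ordered : Prop :=
  forall P : set O, P !=set0 -> exists m, P m /\ forall y, P y -> (m <= y)%O.

(* Xs is the transfinite sequence of iterated non-wandering sets, indexed
   by O (X_0 = X, X_(b+1) = nonwandering set of (X_b, phi_b), X_g =
   intersection of X_b, b < g, for limit g) *)
Definition iterated_nw (phi : X -> X) (Xs : O -> set X) : Prop :=
  (forall g : O, (forall b, ~ (b < g)%O) -> Xs g = setT) /\
  (forall b g : O, (b < g)%O -> (forall y, (b < y)%O -> (g <= y)%O) ->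
      Xs g = nonwandering phi (Xs b)) /\
  (forall g : O, (exists b, (b < g)%O) ->
      (forall b, (b < g)%O -> exists y, (b < y)%O /\ (y < g)%O) ->
      Xs g = \bigcap_(b in [set b | (b < g)%O]) Xs b).

Definition is_limit (g : O) : Prop :=
  (exists b, (b < g)%O) /\
  (forall b, (b < g)%O -> exists y, (b < y)%O /\ (y < g)%O).

(* g <= gamma_0 : the sequence has not stabilized strictly before g,
   i.e. X_(b+1) <> X_b for every b < g *)
Definition le_stab (Xs : O -> set X) (g : O) : Prop :=
  forall b c : O, (b < g)%O -> (b < c)%O ->
    (forall y, (b < y)%O -> (c <= y)%O) -> Xs c <> Xs b.

Definition Ideal (phi : X -> X) (Xs : O -> set X) (g : O) (a : coefs) : Prop :=
  in_scp phi a /\ a 0%N = (fun=> 0) /\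
  forall n : nat, (0 < n)%N -> forall x, Xs g x -> a n x = 0.

End Ordinals.
End Defs.

From HB Require Import structures.
From mathcomp Require Import all_boot all_order all_algebra.
From mathcomp Require Import all_classical all_reals all_analysis.
From mathcomp Require Import complex.
From mathcomp Require Import ring lra zify.
Import Order.TTheory GRing.Theory Num.Theory.
Import numFieldTopology.Exports numFieldNormedType.Exports.
Local Open Scope classical_set_scope.
Local Open Scope ring_scope.
Set Implicit Arguments. Unset Strict Implicit. Unset Printing Implicit Defensive.

(* The coefficient maps E_n are contractive, so the coefficients of a norm limit
   of elements of the ideals I_b, b < g, vanish on every X_b, hence on X_g.
   Conversely, a in I_g is approximated by its Fejer means sigma_L(a), which
   depend contractively on a and have the finitely many coefficients
   (1 - n/L) a_n, 0 < n < L.  Each a_n is in C_0(X) and vanishes on X_g, the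
   intersection of the decreasing closed sets X_b, b < g; by compactness all of
   them are uniformly small on a single X_b, and cutting them off to 0 where
   they are small yields an element of I_b close to sigma_L(a). *)

Section SquaredModulus.
Variable R : realType.
Implicit Types (z w : R[i]) (k t : R).

Definition sqnorm z : R := complex.Re z ^+ 2 + complex.Im z ^+ 2.

Definition modulus z : R := complex.Re `|z|.

Lemma normc_sqnorm z : `|z| ^+ 2 = (sqnorm z)%:C%C.
Proof. by rewrite -add_Re2_Im2. Qed.

Lemma normc_modulus z : `|z| = (modulus z)%:C%C.
Proof. by rewrite /modulus normc_def. Qed.

Lemma modulus_ge0 z : 0 <= modulus z.
Proof. by rewrite /modulus normc_def /= sqrtr_ge0. Qed.

Lemma sqnorm_modulus z : sqnorm z = modulus z ^+ 2.
Proof. by rewrite /modulus normc_def /= sqr_sqrtr // addr_ge0 ?sqr_ge0. Qed.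

Lemma sqnorm_ge0 z : 0 <= sqnorm z.
Proof. by rewrite sqnorm_modulus sqr_ge0. Qed.

Lemma sqnorm0 : sqnorm 0 = 0.
Proof. by rewrite /sqnorm /= expr0n addr0. Qed.

Lemma sqnormN z : sqnorm (- z) = sqnorm z.
Proof. by case: z => a b; rewrite /sqnorm /= !sqrrN. Qed.

Lemma sqnormM z w : sqnorm (z * w) = sqnorm z * sqnorm w.
Proof. by case: z => a b; case: w => c d; rewrite /sqnorm /=; ring. Qed.

Lemma sqnorm_real k : sqnorm k%:C%C = k ^+ 2.
Proof. by rewrite /sqnorm /= expr0n addr0. Qed.

Lemma modulusMl k z : 0 <= k -> modulus (k%:C%C * z) = k * modulus z.
Proof.
move=> k0; rewrite /modulus normrM (ger0_norm (x := k%:C%C)) ?ler0c //.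
by rewrite normc_modulus -rmorphM.
Qed.

Lemma eq0_sqnorm_small z : (forall e, 0 < e -> sqnorm z <= e ^+ 2) -> z = 0.
Proof.
rewrite sqnorm_modulus => small; apply/eqP; rewrite -normr_eq0 normc_modulus.
have m0 := modulus_ge0 z.
have [mpos|m_le0] := ltrP 0 (modulus z).
  by have := small _ (divr_gt0 mpos (ltr0n R 2)); nra.
by rewrite (_ : modulus z = 0) //; apply/eqP; rewrite eq_le m_le0 m0.
Qed.

Lemma sqnorm_sum2_ge0 (I J : Type) (s : seq I) (t : seq J) (F : I -> J -> R[i]) :
  0 <= \sum_(i <- s) \sum_(j <- t) sqnorm (F i j).
Proof. by apply: sumr_ge0 => i _; apply: sumr_ge0 => j _; apply: sqnorm_ge0. Qed.

Lemma sqnormD_le t z w : 0 < t ->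
  sqnorm (z + w) <= (1 + t) * sqnorm z + (1 + t^-1) * sqnorm w.
Proof.
move=> t0; case: z => a b; case: w => c d; rewrite /sqnorm /=.
have tt : t * t^-1 = 1 by rewrite divff // gt_eqF.
have t'0 : 0 <= t^-1 by rewrite invr_ge0 ltW.
have ac : t^-1 * (t * a - c) ^+ 2 = t * t^-1 * t * a ^+ 2 - 2 * (t * t^-1) * a * c + t^-1 * c ^+ 2.
  by ring.
have bd : t^-1 * (t * b - d) ^+ 2 = t * t^-1 * t * b ^+ 2 - 2 * (t * t^-1) * b * d + t^-1 * d ^+ 2.
  by ring.
rewrite tt !mul1r in ac bd.
have := mulr_ge0 t'0 (sqr_ge0 (t * a - c)); have := mulr_ge0 t'0 (sqr_ge0 (t * b - d)).
rewrite ac bd; nra.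
Qed.

Lemma sqnorm_sum_le (I : Type) (s : seq I) (f : I -> R[i]) :
  sqnorm (\sum_(i <- s) f i) <= (size s)%:R * \sum_(i <- s) sqnorm (f i).
Proof.
elim: s => [|i s IH]; first by rewrite !big_nil sqnorm0 mul0r.
rewrite !big_cons /=; case: s IH => [|j s] IH; first by rewrite !big_nil !addr0 mul1r.
set n := size (j :: s) in IH *.
have n0 : 0 < n%:R^-1 :> R by rewrite invr_gt0 ltr0n.
rewrite [f i + _]addrC; apply: (le_trans (sqnormD_le _ _ n0)); rewrite invrK.
have := ler_wpM2l (addr_ge0 ler01 (ltW n0)) IH.
have -> : forall T, (1 + n%:R^-1) * (n%:R * T) = (1 + n%:R) * T :> R.
  by move=> T; field; rewrite pnatr_eq0.
have := sqnorm_ge0 (f i); rewrite -addn1 natrD; nra.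
Qed.

Lemma sqnorm_sum_filter_le (I : eqType) (s t : seq I) (P : pred I) (f : I -> R[i]) :
  uniq s -> {subset seq.filter P s <= t} ->
  sqnorm (\sum_(i <- s | P i) f i) <= (size t)%:R * \sum_(i <- s | P i) sqnorm (f i).
Proof.
move=> us sub; rewrite -big_filter -[X in _ * X]big_filter.
apply: le_trans (sqnorm_sum_le _ _) _.
apply: ler_wpM2r; first by apply: sumr_ge0 => *; apply: sqnorm_ge0.
by rewrite ler_nat uniq_leq_size // filter_uniq.
Qed.

End SquaredModulus.

Lemma sumr_const_filter_le (R : numDomainType) (I : eqType) (s t : seq I) (P : pred I) (c : R) :
  uniq s -> {subset seq.filter P s <= t} -> 0 <= c ->
  \sum_(i <- s | P i) c <= (size t)%:R * c.
Proof.
move=> us sub c0; rewrite -big_filter big_const_seq count_predT iter_addr_0.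
by rewrite mulr_natl ler_wpMn2l // uniq_leq_size // filter_uniq.
Qed.

Section OperatorBound.
Variables (R : realType) (X : pseudoMetricType R) (phi : X -> X).
Implicit Types (a b : coefs X) (c : R).

(* The m-th coordinate, along the fibre over x, of pi(a) applied to
   sum_(k < K) xi_k delta_x (x) e_k. *)
Definition image_coord a (K m : nat) (x : X) (xi : nat -> R[i]) : R[i] :=
  \sum_(k < K | (k <= m)%N) a (m - k)%N (iter k phi x) * xi k.

Definition opbound a c := forall N K M (xs : 'I_N -> X) (xi : 'I_N -> nat -> R[i]),
  injective xs ->
  \sum_(i < N) \sum_(m < M) sqnorm (image_coord a K m (xs i) (xi i))
  <= c ^+ 2 * \sum_(i < N) \sum_(k < K) sqnorm (xi i k).

Lemma opnorm_leP a c : opnorm_le phi a c <-> opbound a c.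
Proof.
have sqnorm_sum2 N M (F : 'I_N -> 'I_M -> R[i]) :
    \sum_(i < N) \sum_(m < M) `|F i m| ^+ 2 = (\sum_(i < N) \sum_(m < M) sqnorm (F i m))%:C%C.
  rewrite rmorph_sum; apply: eq_bigr => i _; rewrite rmorph_sum.
  by apply: eq_bigr => m _; rewrite normc_sqnorm.
rewrite /opnorm_le /opbound.
by split=> bound N K M xs xi xs_inj; have := bound N K M xs xi xs_inj;
  rewrite !sqnorm_sum2 -rmorphM lecR.
Qed.

Lemma opbound_eq0 a c : (forall n x, a n x = 0) -> opbound a c.
Proof.
move=> a0 N K M xs xi _; rewrite big1 => [|i _]; last first.
  rewrite big1 // => m _; rewrite /image_coord big1 ?sqnorm0 // => k _.
  by rewrite a0 mul0r.
by rewrite mulr_ge0 ?sqr_ge0 ?sqnorm_sum2_ge0.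
Qed.

Lemma opbound_le a c c' : 0 <= c -> c <= c' -> opbound a c -> opbound a c'.
Proof.
move=> c0 cc' bound N K M xs xi xs_inj; apply: le_trans (bound N K M xs xi xs_inj) _.
rewrite ler_wpM2r ?sqnorm_sum2_ge0 //.
by rewrite ler_pXn2r // ?nnegrE // (le_trans c0).
Qed.

Lemma sqnorm_coef_le a e n x : opbound a e -> sqnorm (a n x) <= e ^+ 2.
Proof.
(* test the bound on the single vector delta_x (x) e_0 *)
move=> /(_ 1%N 1%N n.+1 (fun=> x) (fun _ k => (k == 0)%:R)).
rewrite !big_ord1 /= sqnorm_real expr1n mulr1.
move=> /(_ (fun i j _ => etrans (ord1 i) (esym (ord1 j)))).
under eq_bigr => m _ do rewrite /image_coord big_mkcond big_ord1 /= subn0 mulr1.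
rewrite big_ord_recr /=; apply: le_trans; rewrite lerDr.
by apply: sumr_ge0 => *; apply: sqnorm_ge0.
Qed.

Lemma opboundN a c : opbound a c -> opbound (fun n x => - a n x) c.
Proof.
move=> bound N K M xs xi xs_inj; apply: le_trans (bound N K M xs xi xs_inj).
under eq_bigr => i _ do under eq_bigr => m _ do
  rewrite /image_coord (eq_bigr _ (fun k _ => mulNr _ _)) sumrN sqnormN.
by [].
Qed.

Lemma opboundD a b c1 c2 : 0 < c1 -> 0 < c2 -> opbound a c1 -> opbound b c2 ->
  opbound (fun n x => a n x + b n x) (c1 + c2).
Proof.
move=> c1_gt0 c2_gt0 bound_a bound_b N K M xs xi xs_inj.
have := bound_a N K M xs xi xs_inj; have := bound_b N K M xs xi xs_inj.
set A := \sum_(i < N) \sum_(m < M) sqnorm (image_coord a K m (xs i) (xi i)).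
set B := \sum_(i < N) \sum_(m < M) sqnorm (image_coord b K m (xs i) (xi i)) => hB hA.
(* Young's inequality with t = c2 / c1 makes the constants add up exactly. *)
have t_gt0 : 0 < c2 / c1 by rewrite divr_gt0.
apply: le_trans (_ : (1 + c2 / c1) * A + (1 + (c2 / c1)^-1) * B <= _).
  rewrite /A /B !mulr_sumr -big_split; apply: ler_sum => i _.
  rewrite !mulr_sumr -big_split; apply: ler_sum => m _.
  rewrite [image_coord _ _ _ _ _](_ : _ = image_coord a K m (xs i) (xi i)
    + image_coord b K m (xs i) (xi i)); first exact: sqnormD_le.
  by rewrite /image_coord -big_split; apply: eq_bigr => k _; rewrite mulrDl.
set S := \sum_(i < N) \sum_(k < K) sqnorm (xi i k) in hA hB *.
have -> : (c1 + c2) ^+ 2 * S =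
    (1 + c2 / c1) * (c1 ^+ 2 * S) + (1 + (c2 / c1)^-1) * (c2 ^+ 2 * S).
  by rewrite invf_div; field; rewrite !gt_eqF.
by apply: lerD; apply: ler_wpM2l => //; rewrite addr_ge0 ?invr_ge0 // ltW.
Qed.

End OperatorBound.

Section FiniteSums.
Variables (R : realType) (X : pseudoMetricType R) (phi : X -> X).
Implicit Types (q : coefs X).

Lemma opbound_monomial q n B : 0 <= B ->
  (forall n' x, n' != n -> q n' x = 0) -> (forall x, sqnorm (q n x) <= B ^+ 2) ->
  opbound phi q B.
Proof.
move=> B0 q0 qB N K M xs xi _; rewrite mulr_sumr; apply: ler_sum => i _.
set x := xs i; set f := xi i.
pose P m k := (k <= m)%N && (m - k == n)%N.
have coord_le m : sqnorm (image_coord phi q K m x f) <=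
    \sum_(0 <= k < K | P m k) B ^+ 2 * sqnorm (f k).
  rewrite /image_coord -(big_mkord (fun k => k <= m)%N (fun k => q (m - k)%N (iter k phi x) * f k)).
  rewrite (bigID (fun k => m - k == n)%N) /= [X in _ + X]big1 ?addr0; last first.
    by move=> k /andP[_ /negbTE nk]; rewrite q0 ?mul0r ?nk.
  apply: le_trans (sqnorm_sum_filter_le (t := [:: (m - n)%N]) _ (iota_uniq 0 (K - 0)) _) _.
    by move=> k; rewrite mem_filter inE => /andP[/andP[km /eqP <-] _]; apply/eqP; lia.
  rewrite /= mul1r; apply: ler_sum => k /andP[_ /eqP ->].
  by rewrite sqnormM ler_wpM2r ?sqnorm_ge0.
apply: le_trans (_ : _ <= \sum_(m < M) \sum_(0 <= k < K | P m k) B ^+ 2 * sqnorm (f k)) _.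
  by apply: ler_sum => m _; apply: coord_le.
rewrite -(big_mkord xpredT (fun m => \sum_(0 <= k < K | P m k) _)).
under eq_bigr => m _ do rewrite big_mkcond /=.
rewrite exchange_big /= -(big_mkord xpredT (fun k => sqnorm (f k))) mulr_sumr.
apply: ler_sum => k _; rewrite -big_mkcond /=.
(* at most one m, namely k + n, contributes *)
apply: le_trans (sumr_const_filter_le (t := [:: (k + n)%N]) (iota_uniq 0 (M - 0)) _ _) _.
- by move=> m; rewrite mem_filter inE => /andP[/andP[km /eqP <-] _]; apply/eqP; lia.
- by rewrite mulr_ge0 ?sqr_ge0 ?sqnorm_ge0.
by rewrite /= mul1r.
Qed.

Lemma opbound_poly (L : nat) (B : nat -> R) q : (forall n, 0 < B n) ->
  (forall n x, (L < n)%N -> q n x = 0) -> (forall n x, sqnorm (q n x) <= B n ^+ 2) ->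
  opbound phi q (\sum_(n < L.+1) B n).
Proof.
move=> B_gt0; elim: L q => [|L IH] q qL qB.
  rewrite big_ord1; apply: (@opbound_monomial _ 0%N) => // [|n' x]; first exact: ltW.
  by rewrite -lt0n => /qL ->.
have sumB_gt0 : 0 < \sum_(n < L.+1) B n.
  by rewrite big_ord_recr /= ltr_wpDl // ?B_gt0 // sumr_ge0 // => n _; apply: ltW.
have -> : q = fun n x => (if (n <= L)%N then q n x else 0) + (if n == L.+1 then q n x else 0).
  apply/funext => n; apply/funext => x.
  case: (ltngtP n L.+1) => [|Ln|->]; last by rewrite ltnn add0r.
    by rewrite ltnS => ->; rewrite addr0.
  by rewrite qL // leqNgt (ltnW Ln) add0r.
rewrite big_ord_recr /=; apply: opboundD => //.
  apply: IH => n x; first by move=> Ln; rewrite leqNgt Ln.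
  by case: ifP; rewrite ?sqnorm0 ?sqr_ge0.
apply: (@opbound_monomial _ L.+1); [exact: ltW | by move=> n' x /negbTE -> |].
by move=> x; rewrite eqxx.
Qed.

End FiniteSums.

Lemma count_window_overlap (J L k m : nat) : (k <= m)%N -> (k + L <= J)%N ->
  \sum_(0 <= j < J | (m <= j < m + L)%N) ((k <= j < k + L)%N : nat) = (L - (m - k))%N.
Proof.
move=> km kJ; rewrite big_mkcond /=.
have -> : \sum_(0 <= j < J) (if (m <= j < m + L)%N then nat_of_bool (k <= j < k + L)%N else 0%N)
    = \sum_(0 <= j < J) nat_of_bool ((m <= j) && (j < k + L))%N.
  apply: eq_bigr => j _; have [|] := leqP m j; have [|] := ltnP j (m + L);
    have [|] := leqP k j; have [|] := ltnP j (k + L) => //=; lia.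
suff -> : forall J', \sum_(0 <= j < J') nat_of_bool ((m <= j) && (j < k + L))%N
    = (minn J' (k + L) - m)%N by lia.
elim=> [|J' IH]; first by rewrite big_geq //; lia.
by rewrite big_nat_recr //= IH; have [|] := leqP m J'; have [|] := ltnP J' (k + L) => /=; lia.
Qed.

Lemma sumr_if_const (V : nmodType) (I : Type) (s : seq I) (P c : pred I) (z : V) :
  \sum_(i <- s | P i) (if c i then z else 0) = z *+ (\sum_(i <- s | P i) (c i : nat)).
Proof.
elim: s => [|i s IH]; first by rewrite !big_nil.
by rewrite !big_cons; case: (P i); case: (c i); rewrite ?IH ?add0r ?mulrS.
Qed.

Section Fejer.
Variables (R : realType) (X : pseudoMetricType R) (phi : X -> X).
Implicit Types (a : coefs X) (c : R).

Definition fejer_weight (L n : nat) : R := (L - n)%:R / L%:R.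

Definition fejer_mean (L : nat) a : coefs X := fun n x => (fejer_weight L n)%:C%C * a n x.

Definition window (L j : nat) (xi : nat -> R[i]) (k : nat) : R[i] :=
  if (k <= j < k + L)%N then xi k else 0.

Lemma fejer_weight_ge0_le1 L n : 0 <= fejer_weight L n <= 1.
Proof.
rewrite divr_ge0 ?ler0n //=; have [->|L0] := posnP L.
  by rewrite /fejer_weight invr0 mulr0 ler01.
by rewrite ler_pdivrMr ?ltr0n // mul1r ler_nat leq_subr.
Qed.

Lemma fejer_weight_eq0 L n : (L <= n)%N -> fejer_weight L n = 0.
Proof. by move=> Ln; rewrite /fejer_weight (eqP (_ : L - n == 0)%N) ?mul0r ?subn_eq0. Qed.

Lemma one_sub_fejer_weight L n : (0 < L)%N -> (n <= L)%N ->
  1 - fejer_weight L n = n%:R / L%:R.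
Proof. by move=> L0 nL; rewrite /fejer_weight natrB //; field; rewrite pnatr_eq0 -lt0n. Qed.

(* pi(sigma_L(a)) xi is the average of the vectors pi(a) (window j xi). *)
Lemma image_coord_fejer a L K m x xi : (0 < L)%N ->
  image_coord phi (fejer_mean L a) K m x xi = (L%:R^-1)%:C%C *
    \sum_(0 <= j < K + L | (m <= j < m + L)%N) image_coord phi a K m x (window L j xi).
Proof.
move=> L0; rewrite /image_coord exchange_big /= mulr_sumr; apply: eq_bigr => k km.
under eq_bigr => j _ do
  rewrite /window (fun_if (fun z => a (m - k)%N (iter k phi x) * z)) mulr0.
rewrite sumr_if_const count_window_overlap //; last by rewrite leq_add2r ltnW.
by rewrite /fejer_mean /fejer_weight rmorphM /= rmorph_nat -mulr_natl; ring.
Qed.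

End Fejer.

Section FejerContraction.
Variables (R : realType) (X : pseudoMetricType R) (phi : X -> X).
Implicit Types (a : coefs X) (c : R).

Lemma sqnorm_image_coord_fejer_le a L K m x xi : (0 < L)%N ->
  sqnorm (image_coord phi (fejer_mean L a) K m x xi) <=
  L%:R^-1 * \sum_(0 <= j < K + L) sqnorm (image_coord phi a K m x (window L j xi)).
Proof.
move=> L0; have Lr : 0 < L%:R :> R by rewrite ltr0n.
rewrite image_coord_fejer // sqnormM sqnorm_real.
apply: le_trans (ler_wpM2l (sqr_ge0 _)
  (sqnorm_sum_filter_le (t := iota m L) _ (iota_uniq 0 (K + L - 0)) _)) _.
  by move=> j; rewrite mem_filter => /andP[/= jm _]; rewrite mem_iota.
have -> : forall S, L%:R^-1 ^+ 2 * ((size (iota m L))%:R * S) = L%:R^-1 * S :> R.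
  by move=> S; rewrite size_iota; field; rewrite gt_eqF.
rewrite ler_pM2l ?invr_gt0 // [X in _ <= X](bigID (fun j => m <= j < m + L)%N) /=.
by rewrite lerDl sumr_ge0 // => j _; apply: sqnorm_ge0.
Qed.

Lemma sum_window_sqnorm_le L J k (xi : nat -> R[i]) :
  \sum_(0 <= j < J) sqnorm (window L j xi k) <= L%:R * sqnorm (xi k).
Proof.
rewrite (bigID (fun j => k <= j < k + L)%N) /= [X in _ + X]big1 => [|j /negbTE jk]; last first.
  by rewrite /window jk sqnorm0.
rewrite addr0 (eq_bigr (fun=> sqnorm (xi k))) => [|j jk]; last by rewrite /window jk.
rewrite -[X in X%:R](size_iota k L).
apply: sumr_const_filter_le (iota_uniq 0 (J - 0)) _ (sqnorm_ge0 _).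
by move=> j; rewrite mem_filter => /andP[/= jm _]; rewrite mem_iota.
Qed.

Lemma opbound_fejer a c L : (0 < L)%N -> opbound phi a c -> opbound phi (fejer_mean L a) c.
Proof.
move=> L0 bound N K M xs xi xs_inj; have Lr : 0 < L%:R :> R by rewrite ltr0n.
set W := fun j i => window L j (xi i).
have sum_windows : \sum_(0 <= j < K + L) \sum_(i < N) \sum_(k < K) sqnorm (W j i k)
    <= L%:R * \sum_(i < N) \sum_(k < K) sqnorm (xi i k).
  rewrite exchange_big mulr_sumr; apply: ler_sum => i _ /=.
  rewrite exchange_big mulr_sumr; apply: ler_sum => k _.
  exact: sum_window_sqnorm_le.
apply: le_trans (_ : _ <= L%:R^-1 * \sum_(0 <= j < K + L)
    \sum_(i < N) \sum_(m < M) sqnorm (image_coord phi a K m (xs i) (W j i))) _.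
  rewrite [X in _ * X]exchange_big mulr_sumr /=; apply: ler_sum => i _.
  rewrite [X in _ * X]exchange_big mulr_sumr; apply: ler_sum => m _.
  exact: sqnorm_image_coord_fejer_le.
rewrite ler_pdivrMl // mulrCA; apply: le_trans (ler_wpM2l (sqr_ge0 c) sum_windows).
by rewrite mulr_sumr; apply: ler_sum => j _; apply: bound.
Qed.

End FejerContraction.

Section ContinuousModulus.
Variable R : realType.

Lemma continuous_Re : continuous (fun z : R[i] => complex.Re z).
Proof.
move=> z; apply/(cvgrPdist_lt (FF := nbhs_filter z)) => e e0.
apply/nbhs_ballP; exists e%:C%C; first by rewrite /= ltcR.
move=> w; rewrite /ball /=; case: z => a b; case: w => c d.
rewrite normc_def ltcR /= => h; apply: le_lt_trans h.
by rewrite -sqrtr_sqr ler_wsqrtr // lerDl sqr_ge0.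
Qed.

Lemma continuous_real_complex : continuous (fun k : R => k%:C%C : R[i]).
Proof.
move=> k; apply/(@cvgrPdist_lt _ (R[i]^o) _ _ (nbhs_filter k)) => -[e e'].
rewrite ltcE /= => /andP[/eqP -> e0]; apply/nbhs_ballP; exists e => // t.
by rewrite /ball /= normc_def ltcE /= subrr expr0n /= addr0 sqrtr_sqr eqxx.
Qed.

Lemma continuous_modulus (T : topologicalType) (f : T -> R[i]) :
  continuous f -> continuous (fun x => modulus (f x)).
Proof.
move=> fc x; apply: (continuous_comp (f := fun x => `|f x|)); last exact: continuous_Re.
by apply: (continuous_comp (fc x)); apply: (@norm_continuous _ (R[i]^o)).
Qed.

End ContinuousModulus.

Section VanishingAtInfinity.
Variables (R : realType) (X : pseudoMetricType R).
Implicit Types (f h : X -> R[i]).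

Lemma C0_cst0 : C0 (fun _ : X => 0 : R[i]).
Proof.
split=> [x|e e0]; first exact: cst_continuous.
exists set0; split=> [|x _] /=; first exact: compact0.
by rewrite normc_def /= expr0n /= addr0 sqrtr0 ltcR.
Qed.

Lemma C0_scale h (k : X -> R) : continuous k -> (forall x, 0 <= k x <= 1) ->
  C0 h -> C0 (fun x => (k x)%:C%C * h x).
Proof.
move=> kc k01 [hc hv]; split=> [x|e e0].
  apply: continuousM _ (hc x); apply: continuous_comp (kc x) _.
  exact: continuous_real_complex.
have [K [cK hK]] := hv e e0; exists K; split => // x Kx.
have /andP[k0 k1] := k01 x; move: (hK x Kx).
rewrite !normc_modulus !ltcR modulusMl //; apply: le_lt_trans.
by rewrite ler_piMl // modulus_ge0.
Qed.

Lemma C0_bounded f : C0 f -> exists B, 0 < B /\ forall x, sqnorm (f x) <= B ^+ 2.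
Proof.
move=> [fc fv]; have [K [cK hK]] := fv 1 ltr01.
have /compact_bounded[M [_ hM]] : compact ((fun x => modulus (f x)) @` K).
  by apply: continuous_compact => //; apply/continuous_subspaceT/continuous_modulus.
exists (Num.max (M + 1) 1); split=> [|x]; first by rewrite lt_max ltr01 orbT.
rewrite sqnorm_modulus lerXn2r ?nnegrE ?modulus_ge0 ?(le_trans ler01) ?le_max ?lexx ?orbT //.
have [Kx|nKx] := pselect (K x).
  have M1 : M < M + 1 by rewrite ltrDl.
  have := hM (M + 1) M1 (modulus (f x)) (ex_intro2 _ _ x Kx erefl).
  by rewrite /= ger0_norm ?modulus_ge0 // => ->.
by move: (hK x nKx); rewrite normc_modulus ltcR => /ltW ->; rewrite orbT.
Qed.

End VanishingAtInfinity.

Section Truncation.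
Variable R : realType.
Implicit Types (eps t : R).

Definition cutoff eps t : R := Num.min 1 (Num.max 0 (2 / eps * t - 1)).

Lemma cutoff_ge0_le1 eps t : 0 <= cutoff eps t <= 1.
Proof. by rewrite /cutoff ge_min lexx le_min ler01 le_max lexx. Qed.

Lemma cutoff_eq1 eps t : 0 < eps -> eps <= t -> cutoff eps t = 1.
Proof.
move=> eps0 epst; have h : 1 <= 2 / eps * t - 1 by rewrite mulrAC lerBrDr ler_pdivlMr //; lra.
by rewrite /cutoff max_r ?min_l // (le_trans ler01).
Qed.

Lemma cutoff_eq0 eps t : 0 < eps -> t <= eps / 2 -> cutoff eps t = 0.
Proof.
move=> eps0 teps; have h : 2 / eps * t - 1 <= 0 by rewrite mulrAC subr_le0 ler_pdivrMr //; lra.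
by rewrite /cutoff max_l // min_r // ler01.
Qed.

Lemma continuous_cutoff eps : continuous (cutoff eps).
Proof.
move=> t; have affine : {for t, continuous (fun s : R => 2 / eps * s - 1 : R^o)}.
  apply: (@continuousB _ R^o _ (fun s : R => 2 / eps * s : R^o) (fun=> 1)).
    by apply: (@continuousM _ _ (fun=> 2 / eps) id); [exact: cst_continuous | exact: cvg_id].
  exact: cst_continuous.
have := @continuous_max R R (fun=> 0 : R^o) _ t (@cst_continuous R R^o 0 t) affine.
exact: (@continuous_min R R (fun=> 1 : R^o) _ t (@cst_continuous R R^o 1 t)).
Qed.

Variable X : pseudoMetricType R.

Lemma C0_truncate (f : X -> R[i]) eps : C0 f -> 0 < eps ->
  exists h : X -> R[i], [/\ C0 h, forall x, sqnorm (f x - h x) <= eps ^+ 2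
    & forall x, modulus (f x) <= eps / 2 -> h x = 0].
Proof.
move=> f_C0 eps0; have fc := f_C0.1.
exists (fun x => (cutoff eps (modulus (f x)))%:C%C * f x); split=> [|x|x fx].
- apply: C0_scale f_C0 => [x|x]; last exact: cutoff_ge0_le1.
  apply: (continuous_comp (f := fun y => modulus (f y)) (g := cutoff eps)).
    exact: continuous_modulus.
  exact: continuous_cutoff.
- set c := cutoff eps (modulus (f x)).
  have -> : f x - c%:C%C * f x = (1 - c)%:C%C * f x by rewrite rmorphB /= rmorph1; ring.
  rewrite sqnormM sqnorm_real sqnorm_modulus mulrC.
  have [fx|fx] := lerP eps (modulus (f x)).
    by rewrite /c cutoff_eq1 // subrr expr0n mulr0 sqr_ge0.
  have /andP[c0 c1] := cutoff_ge0_le1 eps (modulus (f x)); have m0 := modulus_ge0 (f x).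
  have h1 : (1 - c) ^+ 2 <= 1 by rewrite expr_le1 ?subr_ge0 // gerBl.
  have h2 : modulus (f x) ^+ 2 <= eps ^+ 2 by rewrite lerXn2r ?nnegrE // ltW.
  by rewrite -[eps ^+ 2]mulr1; apply: ler_pM; rewrite ?sqr_ge0.
- by rewrite cutoff_eq0 // mul0r.
Qed.

End Truncation.

Section WellOrders.
Variables (d : Order.disp_t) (O : orderType d).

Lemma well_ordered_ind : well_ordered O -> forall P : O -> Prop,
  (forall g, (forall b, (b < g)%O -> P b) -> P g) -> forall g, P g.
Proof.
move=> wo P IH g; apply: contrapT => nPg.
have [m [nPm m_min]] := wo [set x | ~ P x] (ex_intro _ g nPg).
apply/nPm/IH => b bm; apply: contrapT => /m_min.
by rewrite leNgt bm.
Qed.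

Lemma zero_succ_or_limit (g : O) : (forall b, ~ (b < g)%O) \/
  (exists b, (b < g)%O /\ forall y, (b < y)%O -> (g <= y)%O) \/ is_limit g.
Proof.
have [[b bg]|nb] := pselect (exists b, (b < g)%O); last by left=> b bg; apply: nb; exists b.
right; have [|not_succ] := pselect (exists b, (b < g)%O /\ forall y, (b < y)%O -> (g <= y)%O).
  by left.
right; split=> [|c cg]; first by exists b.
apply: contrapT => no_between; apply: not_succ; exists c; split=> // y cy.
by rewrite leNgt; apply/negP => yg; apply: no_between; exists y.
Qed.

End WellOrders.

Lemma compact_meets_closed_chain (T : topologicalType) (d : Order.disp_t) (I : orderType d)
    (D : set I) (Y : I -> set T) (K : set T) :
  compact K -> D !=set0 -> (forall i, D i -> closed (Y i)) ->
  (forall i j, D i -> D j -> (i <= j)%O -> Y j `<=` Y i) ->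
  (forall i, D i -> (Y i `&` K) !=set0) -> (\bigcap_(i in D) Y i `&` K) !=set0.
Proof.
move=> cK [i0 Di0] Y_closed Y_decr Y_meets.
pose F := filter_from D (fun i => Y i `&` K).
have FF : ProperFilter F.
  apply: filter_from_proper => //; apply: filter_from_filter; first by exists i0.
  move=> i j Di Dj; have [ij|/ltW ji] := leP i j.
    by exists j => // x [Yx Kx]; do !split => //; apply: (Y_decr i j).
  by exists i => // x [Yx Kx]; do !split => //; apply: (Y_decr j i).
have [p [Kp p_cluster]] := cK F FF (ex_intro2 _ _ i0 Di0 (fun x => @proj2 _ _)).
exists p; split=> // i Di; apply: Y_closed => // B pB.
have [|x [[Yx _] Bx]] := p_cluster (Y i `&` K) B _ pB; first by exists i.
by exists x.
Qed.

Section IteratedNonwandering.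
Variables (R : realType) (X : pseudoMetricType R) (phi : X -> X).
Variables (d : Order.disp_t) (O : orderType d) (Xs : O -> set X).
Hypotheses (wo : well_ordered O) (Xs_nw : iterated_nw phi Xs).

Lemma nonwandering_closed (Y : set X) : closed Y -> closed (nonwandering phi Y).
Proof.
move=> cY y y_cl; split=> [|U oU Uy].
  by apply: cY => B /y_cl[z [[Yz _] Bz]]; exists z.
by have [z [[_ z_nw] Uz]] := y_cl U (open_nbhs_nbhs (conj oU Uy)); apply: z_nw.
Qed.

Lemma iterated_nw_closed g : closed (Xs g).
Proof.
have [Xs0 [Xs_succ Xs_lim]] := Xs_nw.
elim/(well_ordered_ind wo): g => g IH.
have [g0|[[b [bg b_pred]]|[g1 g2]]] := zero_succ_or_limit g.
- by rewrite (Xs0 g g0); apply: closedT.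
- by rewrite (Xs_succ b g bg b_pred); apply/nonwandering_closed/IH.
- by rewrite (Xs_lim g g1 g2); apply: closed_bigI => b; apply: IH.
Qed.

Lemma iterated_nw_decr b g : (b <= g)%O -> Xs g `<=` Xs b.
Proof.
have [Xs0 [Xs_succ Xs_lim]] := Xs_nw.
rewrite le_eqVlt => /orP[/eqP -> //|]; move: b.
elim/(well_ordered_ind wo): g => g IH b bg.
have [g0|[[c [cg c_pred]]|[g1 g2]]] := zero_succ_or_limit g.
- by have := g0 b bg.
- rewrite (Xs_succ c g cg c_pred) => x [Xcx _].
  have [bc|cb|->] := ltgtP b c; [exact: IH cg b bc x Xcx | | by []].
  by have := c_pred b cb; rewrite leNgt bg.
- by rewrite (Xs_lim g g1 g2) => x /(_ b bg).
Qed.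

End IteratedNonwandering.

Section LimitStage.
Variables (R : realType) (X : pseudoMetricType R) (phi : X -> X).
Variables (d : Order.disp_t) (O : orderType d) (Xs : O -> set X) (g : O).
Hypotheses (wo : well_ordered O) (Xs_nw : iterated_nw phi Xs) (g_lim : is_limit g).

Lemma iterated_nw_limit : Xs g = \bigcap_(b in [set b | (b < g)%O]) Xs b.
Proof. by have [_ [_ Xs_lim]] := Xs_nw; case: g_lim => g1 g2; apply: Xs_lim. Qed.

Lemma C0_small_on_stage (f : X -> R[i]) del : C0 f -> 0 < del ->
  (forall x, Xs g x -> f x = 0) ->
  exists2 b, (b < g)%O & forall x, Xs b x -> modulus (f x) < del.
Proof.
move=> [fc fv] del0 f0; apply: contrapT => not_small.
set S := [set x | del <= modulus (f x)].
have cS : closed S.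
  exact: (continuous_closedP _).1 (continuous_modulus fc) [set y : R | del <= y]
    (@closed_ge R del).
have [K [cK K_tail]] := fv del del0.
have SK : S `<=` K.
  move=> x Sx; apply: contrapT => /K_tail; rewrite normc_modulus ltcR.
  by rewrite ltNge Sx.
have [p [Xp Sp]] : (\bigcap_(b in [set b | (b < g)%O]) Xs b `&` S) !=set0.
  apply: compact_meets_closed_chain => [||b _|b c _ _|b bg].
  - exact: subclosed_compact cS cK SK.
  - by have [[b bg] _] := g_lim; exists b.
  - exact: (iterated_nw_closed wo Xs_nw).
  - exact: (iterated_nw_decr wo Xs_nw).
  - apply: contrapT => no_point; apply: not_small; exists b => // x Xx.
    by rewrite ltNge; apply/negP => fx; apply: no_point; exists x.
have := f0 p; rewrite iterated_nw_limit => /(_ Xp) fp0.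
by move: Sp; rewrite /S /= fp0 (_ : modulus 0 = 0) ?lt_geF // /modulus normr0.
Qed.

Lemma C0_small_on_stage_upto (a : coefs X) del N : 0 < del ->
  (forall n, C0 (a n)) -> (forall n, (0 < n)%N -> forall x, Xs g x -> a n x = 0) ->
  exists2 b, (b < g)%O & forall n x, (0 < n < N)%N -> Xs b x -> modulus (a n x) < del.
Proof.
move=> del0 aC a0; elim: N => [|N [b bg b_small]].
  by have [b bg] := g_lim.1; exists b => // n x; rewrite ltn0 andbF.
have [N0|N_gt0] := posnP N.
  by exists b => // n x /andP[n0 nN]; exfalso; lia.
have [c cg c_small] := C0_small_on_stage (aC N) del0 (a0 N N_gt0).
have decr := iterated_nw_decr wo Xs_nw.
exists (Order.max b c); first by rewrite gt_max bg cg.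
move=> n x /andP[n0]; rewrite ltnS leq_eqVlt => /orP[/eqP -> Xx|nN Xx].
  by apply/c_small/(decr _ _ _ x Xx); rewrite le_max lexx orbT.
by apply: b_small; [rewrite n0 | apply: (decr _ _ _ x Xx); rewrite le_max lexx].
Qed.

End LimitStage.

Section FejerApproximation.
Variables (R : realType) (X : pseudoMetricType R) (phi : X -> X).

Lemma opbound_fejer_defect (p : coefs X) (B : nat -> R) (N L : nat) :
  (0 < N)%N -> (N <= L)%N -> (forall n, 0 < B n) ->
  (forall n x, (N <= n)%N -> p n x = 0) -> (forall n x, sqnorm (p n x) <= B n ^+ 2) ->
  opbound phi (fun n x => p n x - fejer_mean L p n x) (N%:R / L%:R * \sum_(n < N.+1) B n).
Proof.
move=> N0 NL B_gt0 p0 pB; have L0 : (0 < L)%N := leq_trans N0 NL.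
have NL_gt0 : 0 < N%:R / L%:R :> R by rewrite divr_gt0 ?ltr0n.
rewrite mulr_sumr.
apply: (@opbound_poly _ _ _ N (fun n => N%:R / L%:R * B n)) => [n|n x Nn|n x].
- by rewrite mulr_gt0.
- by rewrite /fejer_mean p0 ?(ltnW Nn) // mulr0 subrr.
have -> : p n x - fejer_mean L p n x = (1 - fejer_weight R L n)%:C%C * p n x.
  by rewrite /fejer_mean rmorphB /= rmorph1; ring.
have [nN|Nn] := ltnP n N; last by rewrite p0 // mulr0 sqnorm0 sqr_ge0.
rewrite sqnormM sqnorm_real one_sub_fejer_weight // ?(leq_trans (ltnW nN)) //.
rewrite [X in _ <= X]exprMn ler_pM ?sqr_ge0 ?sqnorm_ge0 // lerXn2r ?nnegrE ?divr_ge0 ?ler0n //.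
by rewrite ler_pM2r ?invr_gt0 ?ltr0n // ler_nat ltnW.
Qed.

Lemma fejer_approx (a : coefs X) E : in_scp phi a -> 0 < E ->
  exists2 L, (0 < L)%N & opbound phi (fun n x => a n x - fejer_mean L a n x) E.
Proof.
move=> [_ a_approx] E0; have E3 : 0 < E / 3 by rewrite divr_gt0.
have [p [[pC [N pN]] /opnorm_leP ap]] := a_approx _ E3.
have [B B_bound] := choice (fun n => C0_bounded (pC n)).
set SB := \sum_(n < N.+2) B n.
(* L = (N + 1) k with k > 3 SB / E makes the defect (N + 1) / L * SB below E / 3 *)
set k := (Num.truncn (3 * SB / E)).+1.
have k_big : 3 * SB / E < k%:R by apply: truncnS_gt.
exists (N.+1 * k)%N; first by rewrite muln_gt0.
have defect := @opbound_fejer_defect p B N.+1 (N.+1 * k) (ltn0Sn _)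
  (leq_pmulr _ (ltn0Sn _)) (fun n => (B_bound n).1)
  (fun n x Nn => congr1 (@^~ x) (pN n (ltnW Nn))) (fun n => (B_bound n).2).
have -> : (fun n x => a n x - fejer_mean (N.+1 * k) a n x) = fun n x =>
    (a n x - p n x) + - fejer_mean (N.+1 * k) (fun n x => a n x - p n x) n x
    + (p n x - fejer_mean (N.+1 * k) p n x).
  by apply/funext => n; apply/funext => x; rewrite /fejer_mean; ring.
have SB_gt0 : 0 < SB.
  rewrite /SB big_ord_recr /= ltr_wpDl ?(B_bound _).1 // sumr_ge0 // => n _.
  exact/ltW/(B_bound _).1.
have k_gt0 : 0 < k%:R :> R by rewrite ltr0n.
have k_inv : N.+1%:R / (N.+1 * k)%:R = k%:R^-1 :> R.
  by rewrite natrM invfM mulrA divff ?mul1r // pnatr_eq0.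
rewrite k_inv -/SB in defect.
have D_gt0 : 0 < k%:R^-1 * SB by rewrite mulr_gt0 ?invr_gt0.
have D_small : k%:R^-1 * SB <= E / 3.
  by rewrite mulrC ler_pdivrMr //; move: k_big; rewrite ltr_pdivrMr //; nra.
apply: opbound_le (opboundD _ D_gt0 (opboundD E3 E3 ap (opboundN (opbound_fejer _ ap))) defect).
all: rewrite ?muln_gt0 ?addr_gt0 //; lra.
Qed.

Lemma in_scp_poly a : is_poly a -> in_scp phi a.
Proof.
move=> a_poly; split=> [|e e0]; first by case: a_poly.
by exists a; split=> //; apply/opnorm_leP/opbound_eq0 => n x; rewrite subrr.
Qed.

Lemma opbound_fejer_mean_uniform (q : coefs X) L eps : 0 < eps ->
  (forall n x, sqnorm (q n x) <= eps ^+ 2) -> opbound phi (fejer_mean L q) (L.+1%:R * eps).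
Proof.
move=> eps0 q_small.
have -> : L.+1%:R * eps = \sum_(n < L.+1) eps by rewrite sumr_const card_ord mulr_natl.
apply: (@opbound_poly _ _ _ L (fun=> eps)) => // n x => [Ln|].
  by rewrite /fejer_mean fejer_weight_eq0 ?mul0r // ltnW.
rewrite /fejer_mean sqnormM sqnorm_real -[eps ^+ 2]mul1r ler_pM ?sqr_ge0 ?sqnorm_ge0 //.
by have /andP[w0 w1] := fejer_weight_ge0_le1 R L n; rewrite expr_le1.
Qed.

End FejerApproximation.

Section Ideals.
Variables (R : realType) (X : pseudoMetricType R) (phi : X -> X).
Variables (d : Order.disp_t) (O : orderType d) (Xs : O -> set X) (g : O).
Hypotheses (wo : well_ordered O) (Xs_nw : iterated_nw phi Xs).
Implicit Types (a c : coefs X).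

Lemma coef_eq0_of_approx a n x :
  (forall e, 0 < e -> exists2 c, opbound phi (fun n x => a n x - c n x) e & c n x = 0) ->
  a n x = 0.
Proof.
move=> a_approx; apply: eq0_sqnorm_small => e /a_approx[c /(sqnorm_coef_le n x)].
by move=> + c0; rewrite c0 subr0.
Qed.

Lemma Ideal_of_approx a : in_scp phi a ->
  (forall e, 0 < e -> exists b, (b < g)%O /\
     exists c, Ideal phi Xs b c /\ opnorm_le phi (fun n x => a n x - c n x) e) ->
  Ideal phi Xs g a.
Proof.
move=> a_scp a_approx; split=> //; split=> [|n n0 x Xx].
  apply/funext => x; apply: coef_eq0_of_approx.
  by move=> e /a_approx[b [_ [c [[_ [c0 _]] /opnorm_leP ac]]]]; exists c; rewrite ?c0.
apply: coef_eq0_of_approx => e /a_approx[b [bg [c [[_ [_ cb]] /opnorm_leP ac]]]].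
by exists c => //; apply: cb => //; apply: (iterated_nw_decr wo Xs_nw (ltW bg)).
Qed.

(* c is sigma_L(a) with each a_n, n > 0, cut off to 0 where |a_n| <= eps / 2. *)
Lemma approx_of_Ideal a E : is_limit g -> Ideal phi Xs g a -> 0 < E ->
  exists b, (b < g)%O /\
    exists c, Ideal phi Xs b c /\ opnorm_le phi (fun n x => a n x - c n x) E.
Proof.
move=> g_lim [a_scp [a0 a_Xg]] E0; have E2 : 0 < E / 2 by rewrite divr_gt0.
have [L L0 a_fejer] := fejer_approx a_scp E2.
set eps := E / (2 * L.+1%:R).
have eps0 : 0 < eps by rewrite divr_gt0 // mulr_gt0 // ltr0n.
have [h h_trunc] := choice (fun n => C0_truncate (a_scp.1 n) eps0).
have [b bg a_small] := C0_small_on_stage_upto wo Xs_nw g_lim L (divr_gt0 eps0 (ltr0n R 2))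
  a_scp.1 a_Xg.
pose h' : coefs X := fun n x => if n == 0%N then 0 else h n x.
exists b; split=> //; exists (fejer_mean L h'); split; [split; [|split]|].
- apply: in_scp_poly; split=> [n|]; last first.
    by exists L => n Ln; apply/funext => x; rewrite /fejer_mean fejer_weight_eq0 ?mul0r.
  apply: C0_scale => [x|x|]; [exact: cst_continuous | exact: fejer_weight_ge0_le1 |].
  by rewrite /h'; case: eqP => _; [exact: C0_cst0 | case: (h_trunc n)].
- by apply/funext => x; rewrite /fejer_mean /h' eqxx mulr0.
- move=> n n0 x Xx; rewrite /fejer_mean /h' gtn_eqF //.
  have [nL|Ln] := ltnP n L; last by rewrite fejer_weight_eq0 ?mul0r.
  by have [_ _ ->] := h_trunc n; rewrite ?mulr0 // ltW // a_small // n0 nL.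
apply/opnorm_leP.
have -> : (fun n x => a n x - fejer_mean L h' n x) = fun n x =>
    (a n x - fejer_mean L a n x) + fejer_mean L (fun n x => a n x - h' n x) n x.
  by apply/funext => n; apply/funext => x; rewrite /fejer_mean; ring.
have diff_small n x : sqnorm (a n x - h' n x) <= eps ^+ 2.
  by rewrite /h'; case: eqP => [->|_]; [rewrite a0 subrr sqnorm0 sqr_ge0 | case: (h_trunc n)].
have Leps : L.+1%:R * eps = E / 2 by rewrite /eps; field; rewrite gt_eqF // mulr_gt0 // ltr0n.
apply: opbound_le (opboundD E2 _ a_fejer (opbound_fejer_mean_uniform phi L eps0 diff_small)).
- by rewrite addr_ge0 // mulr_ge0 // ltW.
- by rewrite Leps -splitr.
by rewrite mulr_gt0 // ltr0n.
Qed.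

End Ideals.

Unset Implicit Arguments.

Theorem lemma2p4 (R : realType) (X : pseudoMetricType R) (phi : X -> X)
  (d : Order.disp_t) (O : orderType d) (Xs : O -> set X) (g : O) :
  hausdorff_space X -> locally_compact [set: X] -> homeomorphism phi ->
  well_ordered O -> iterated_nw phi Xs ->
  is_limit g -> le_stab Xs g ->
  forall a : coefs X,
    Ideal phi Xs g a <->
    (in_scp phi a /\
     forall e : R, 0 < e -> exists b : O, (b < g)%O /\
       exists c : coefs X, Ideal phi Xs b c /\
         opnorm_le phi (fun n x => a n x - c n x) e).
Proof.
move=> _ _ _ wo Xs_nw g_lim _ a; split=> [a_Ig|[a_scp a_approx]].
  split=> [|e e0]; first by case: a_Ig.
  exact (approx_of_Ideal wo Xs_nw g_lim a_Ig e0).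
exact (Ideal_of_approx wo Xs_nw a_scp a_approx).
Qed.
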